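(* Let $x_e$ ($e\ge1$) be indeterminates and set $x_0=1$. Then in $\mathbb{Z}[x_1,x_2,\dots][[t]]$, $$\sum_{n=0}^\infty\sum_{\sigma\in\mathcal{S}(n)}N_\sigma\Big(\prod_{1^e\in\sigma}x_e\Big)t^n=\Big(\sum_{n=0}^\infty x_nt^n\Big)^p(1-t)^p(1-pt)^{-1},$$ where the product runs over the symbols of $\sigma$ of the form $1^e$ (i.e. with $d_j=1$), counted with multiplicity.
   Context: Fix a prime $p$. A splitting type of degree $n$ is a finite multiset $\sigma=(d_1^{e_1}\,d_2^{e_2}\cdots d_t^{e_t})$ of symbols $d_j^{e_j}$ with $d_j,e_j$ positive integers and $\sum_j d_je_j=n$; $\mathcal{S}(n)$ denotes the set of splitting types of degree $n$ ($\mathcal{S}(0)$ consists of the empty type). A monic $f\in\mathbb{F}_p[x]$ of degree $n$ has splitting type $\sigma$ if $f=\prod_{j=1}^tf_j^{e_j}$ with $f_j$ distinct monic irreducible polynomials with $\deg f_j=d_j$. $N_\sigma$ is the number of monic polynomials in $\mathbb{F}_p[x]$ of splitting type $\sigma$. *)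

From HB Require Import structures.
From mathcomp Require Import all_boot all_algebra.
From mathcomp Require Import boolp.

Set Implicit Arguments.
Unset Strict Implicit.
Unset Printing Implicit Defensive.

Import GRing.Theory.
Local Open Scope ring_scope.

(* A splitting type (d_1^{e_1} ... d_t^{e_t}) is a multiset of symbols d^e,
   represented as a sequence of pairs (d, e), sorted for the lexicographic
   order so that each multiset has exactly one representative. *)
Definition lepair (a b : nat * nat) : bool :=
  (a.1 < b.1)%N || ((a.1 == b.1) && (a.2 <= b.2)%N).

Fixpoint seqs_upto (T : Type) (A : seq T) (k : nat) : seq (seq T) :=
  if k is k'.+1 then [::] :: [seq a :: s | a <- A, s <- seqs_upto A k']
  else [:: [::]].

Definition stdeg (s : seq (nat * nat)) : nat := \sum_(de <- s) de.1 * de.2.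

Definition stypes (n : nat) : seq (seq (nat * nat)) :=
  [seq s <- seqs_upto [seq (d, e) | d <- iota 1 n, e <- iota 1 n] n
     | sorted lepair s & stdeg s == n].

Definition has_stype (p : nat) (f : {poly 'F_p}) (sigma : seq (nat * nat))
  : Prop :=
  exists s : seq ({poly 'F_p} * nat),
    [/\ uniq [seq ge.1 | ge <- s],
        all (fun ge : {poly 'F_p} * nat => (ge.1 \is monic) && (0 < ge.2)%N) s,
        (forall ge, ge \in s -> irreducible_poly ge.1),
        f = \prod_(ge <- s) ge.1 ^+ ge.2
      & perm_eq [seq ((size (ge.1 : {poly 'F_p})).-1, ge.2) | ge <- s] sigma].

Definition mkmonic (p n : nat) (c : n.-tuple 'F_p) : {poly 'F_p} :=
  'X^n + \sum_(i < n) c`_i *: 'X^i.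

(* N_sigma : number of monic polynomials of F_p[x] of splitting type sigma
   (every such polynomial has degree stdeg sigma). *)
Definition Nst (p : nat) (sigma : seq (nat * nat)) : nat :=
  #|[set c : (stdeg sigma).-tuple 'F_p | `[< has_stype (mkmonic c) sigma >]]|.

Definition psmul (R : comNzRingType) (f g : nat -> R) : nat -> R :=
  fun n => \sum_(i < n.+1) f i * g (n - i)%N.
Definition psone (R : comNzRingType) : nat -> R := fun n => (n == 0%N)%:R.
Definition psexp (R : comNzRingType) (f : nat -> R) (k : nat) : nat -> R :=
  iter k (psmul f) (psone R).
Definition ps_one_minus_t (R : comNzRingType) : nat -> R :=
  fun n => if n == 0%N then 1 else if n == 1%N then -1 else 0.
Definition ps_inv_one_minus (R : comNzRingType) (c : R) : nat -> R :=
  fun n => c ^+ n.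

From HB Require Import structures.
From mathcomp Require Import all_boot all_algebra.
From mathcomp Require Import boolp.
From mathcomp Require Import zify.

Set Implicit Arguments.
Unset Strict Implicit.
Unset Printing Implicit Defensive.

Import GRing.Theory.
Local Open Scope ring_scope.

(* For a list S of distinct points of F_p, let A_S(t) be the series whose
   t^n coefficient is the sum over monic f of degree n of the weight
   prod_{a in S} x_{mult_a(f)}, where mult_a is the root multiplicity.
   - A_[] = sum_n p^n t^n = (1 - pt)^{-1}, as there are p^n monic f of degree n.
   - For b not in S, writing f = (X - b)^e g with g(b) != 0 shows that both
     A_(b :: S) and A_S are convolutions with the series of such g, by
     X(t) = sum_e x_e t^e and by (1 - t)^{-1} respectively, so
     A_(b :: S) = X(t) (1 - t) A_S.
   Hence A_{F_p} = X(t)^p (1 - t)^p (1 - pt)^{-1}, the right-hand side.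
   On the other side, by unique factorization into monic irreducibles every
   monic f of degree n has exactly one splitting type sigma in S(n), and the
   root multiplicities of f are the exponents of its linear factors, so the
   weight of f in A_{F_p} is prod_{1^e in sigma} x_e.  Grouping the monic
   polynomials by splitting type gives the left-hand side. *)

Section PowerSeries.
Variable R : comNzRingType.
Implicit Types f g h : nat -> R.

Definition ps_trunc (N : nat) f : {poly R} := \poly_(i < N) f i.

(* Coefficients of a product of series are coefficients of a product of
   polynomials, which transfers the ring laws of {poly R} to series. *)
Lemma psmul_trunc f g N n :
  (n < N)%N -> psmul f g n = (ps_trunc N f * ps_trunc N g)`_n.
Proof.
move=> ltnN; rewrite coefM /psmul; apply: eq_bigr => -[i /= lt_i_n] _.
have lt_iN : (i < N)%N by apply: leq_ltn_trans ltnN; rewrite -ltnS.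
by rewrite !coef_poly lt_iN (leq_ltn_trans (leq_subr i n) ltnN).
Qed.

Lemma coefM_low (r q1 q2 : {poly R}) n :
  (forall i, (i <= n)%N -> q1`_i = q2`_i) -> (r * q1)`_n = (r * q2)`_n.
Proof.
by move=> eq_q; rewrite !coefM; apply: eq_bigr => -[i /= _] _; rewrite eq_q ?leq_subr.
Qed.

Lemma coef_trunc_psmul f g n i :
  (i <= n)%N -> (ps_trunc n.+1 (psmul f g))`_i = (ps_trunc n.+1 f * ps_trunc n.+1 g)`_i.
Proof. by move=> le_in; rewrite coef_poly ltnS le_in (@psmul_trunc _ _ n.+1). Qed.

Lemma psmulC f g : psmul f g = psmul g f.
Proof. by apply: funext => n; rewrite !(@psmul_trunc _ _ n.+1) // mulrC. Qed.

Lemma psmulA f g h : psmul f (psmul g h) = psmul (psmul f g) h.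
Proof.
apply: funext => n; rewrite !(@psmul_trunc _ _ n.+1) //.
rewrite (@coefM_low _ _ _ _ (@coef_trunc_psmul g h n)) mulrC.
rewrite [in RHS]mulrC (@coefM_low _ _ _ _ (@coef_trunc_psmul f g n)).
by rewrite -mulrA mulrC -mulrA.
Qed.

Lemma psmul1 f : psmul (psone R) f = f.
Proof.
apply: funext => n; rewrite /psmul big_ord_recl /psone /= mul1r subn0.
by rewrite big1 ?addr0 // => i _; rewrite mul0r.
Qed.

Lemma one_minus_tV : psmul (@ps_one_minus_t R) (ps_inv_one_minus 1) = psone R.
Proof.
apply: funext => -[|n]; rewrite /psmul /psone /ps_one_minus_t /ps_inv_one_minus.
  by rewrite big_ord1 /= expr1n mulr1.
rewrite 2!big_ord_recl /= !expr1n !mulr1 big1 ?addr0 ?subrr // => i _.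
by rewrite mul0r.
Qed.

Lemma iter_psmul2 f g h k :
  iter k (fun u => psmul f (psmul g u)) h = psmul (psexp f k) (psmul (psexp g k) h).
Proof.
elim: k => [|k IHk] /=; first by rewrite !psmul1.
rewrite IHk -[RHS]psmulA; congr psmul.
rewrite psmulA [psmul g _]psmulC -psmulA; congr psmul.
by rewrite psmulA.
Qed.

End PowerSeries.

Section MonicPolynomials.
Variable p : nat.
Local Notation poly := {poly 'F_p}.

Lemma coef_mkmonic n (c : n.-tuple 'F_p) i :
  (mkmonic c)`_i = (i == n)%:R + (if (i < n)%N then c`_i else 0).
Proof. by rewrite /mkmonic -poly_def coefD coefXn coef_poly. Qed.

Lemma size_mkmonic n (c : n.-tuple 'F_p) : size (mkmonic c) = n.+1.
Proof. by rewrite /mkmonic -poly_def size_polyDl size_polyXn // ltnS size_poly. Qed.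

Lemma mkmonic_monic n (c : n.-tuple 'F_p) : mkmonic c \is monic.
Proof.
by rewrite monicE /lead_coef size_mkmonic /= coef_mkmonic eqxx ltnn addr0.
Qed.

Lemma mkmonic_inj n : injective (@mkmonic p n).
Proof.
move=> c1 c2 eq_c; apply: val_inj; apply: (@eq_from_nth _ 0); first by rewrite !size_tuple.
move=> i; rewrite size_tuple => lt_in.
have := congr1 (fun q : poly => q`_i) eq_c.
by rewrite !coef_mkmonic lt_in (ltn_eqF lt_in) !add0r.
Qed.

Definition monics n : seq poly := map (@mkmonic p n) (enum {: n.-tuple 'F_p}).

Lemma monics_uniq n : uniq (monics n).
Proof. by rewrite map_inj_uniq ?enum_uniq //; apply: mkmonic_inj. Qed.

Lemma mem_monics n f : (f \in monics n) = (f \is monic) && (size f == n.+1).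
Proof.
apply/idP/andP => [/mapP[c _ ->]|[mon_f /eqP size_f]].
  by rewrite mkmonic_monic size_mkmonic.
have -> : f = mkmonic [tuple f`_i | i < n].
  apply/polyP => i; rewrite coef_mkmonic.
  case: ltnP => [lt_in|le_ni].
    by rewrite (ltn_eqF lt_in) add0r -[i]/(nat_of_ord (Ordinal lt_in)) nth_mktuple.
  rewrite addr0; case: eqP => [->|/eqP ne_in].
    by move/monicP: mon_f; rewrite /lead_coef size_f.
  by rewrite nth_default // size_f ltn_neqAle eq_sym ne_in.
by apply: map_f; rewrite mem_enum.
Qed.

Lemma sum_monics (R : comNzRingType) n (G : poly -> R) :
  \sum_(f <- monics n) G f = \sum_(c : n.-tuple 'F_p) G (mkmonic c).
Proof. by rewrite big_map big_enum. Qed.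

End MonicPolynomials.

Section RootMultiplicitySeries.
Variables (p : nat) (R : comNzRingType) (x : nat -> R).
Local Notation poly := {poly 'F_p}.

Definition root_weight (S : seq 'F_p) (f : poly) : R := \prod_(a <- S) x (mup a f).

Definition root_series (S : seq 'F_p) : nat -> R :=
  fun n => \sum_(f <- monics p n) root_weight S f.

Lemma monic_XsubC_exp (b : 'F_p) e : ('X - b%:P) ^+ e \is monic.
Proof. exact/monic_exp/monicXsubC. Qed.

Lemma monics_mup_perm (b : 'F_p) e n : (e <= n)%N ->
  perm_eq [seq f <- monics p n | mup b f == e]
          [seq ('X - b%:P) ^+ e * g | g <- [seq g <- monics p (n - e) | ~~ root g b]].
Proof.
move=> le_en; have mon_Xe := monic_XsubC_exp b e.
apply: uniq_perm; first by rewrite filter_uniq // monics_uniq.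
  by rewrite map_inj_uniq ?filter_uniq ?monics_uniq //; apply/mulfI/monic_neq0.
move=> f; rewrite mem_filter mem_monics; apply/andP/mapP.
  case=> /eqP mup_f /andP[mon_f /eqP size_f].
  have f_neq0 : f != 0 by apply: monic_neq0.
  have Xe_dvd_f : ('X - b%:P) ^+ e %| f by rewrite -mup_geq // mup_f.
  pose g := f %/ ('X - b%:P) ^+ e.
  have def_f : f = ('X - b%:P) ^+ e * g by rewrite mulrC divpK.
  have mon_g : g \is monic by rewrite -(monicMl _ mon_Xe) -def_f.
  have g_root_free : ~~ root g b.
    apply/negP => gb; suff : (e.+1 <= mup b f)%N by rewrite mup_f ltnn.
    by rewrite mup_geq // def_f exprSr dvdp_mul2l ?monic_neq0 // -root_factor_theorem.
  exists g => //; rewrite mem_filter mem_monics g_root_free mon_g /=.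
  move: size_f; rewrite def_f size_monicM ?monic_neq0 // size_exp_XsubC.
  by move: (size g) => k; rewrite addSn /= => ?; apply/eqP; lia.
case=> g; rewrite mem_filter mem_monics => /andP[gb /andP[mon_g /eqP size_g]] ->.
rewrite mupM ?monic_neq0 // mup_XsubCX eqxx mupNroot // addn0 monicMl //.
by rewrite mon_g size_monicM ?monic_neq0 // size_exp_XsubC size_g; split=> //; lia.
Qed.

Lemma mup_lt_monics (b : 'F_p) n f : f \in monics p n -> (mup b f < n.+1)%N.
Proof.
rewrite mem_monics => /andP[mon_f /eqP size_f]; have f_neq0 := monic_neq0 mon_f.
rewrite ltnS mup_leq //; apply/negP => /(dvdp_leq f_neq0).
by rewrite size_exp_XsubC size_f ltnn.
Qed.

Lemma sum_monics_by_mup (b : 'F_p) n (G : poly -> R) :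
  \sum_(f <- monics p n) G f =
  \sum_(e < n.+1) \sum_(g <- monics p (n - e) | ~~ root g b) G (('X - b%:P) ^+ e * g).
Proof.
rewrite (eq_big_seq (fun f => \sum_(e < n.+1 | mup b f == e) G f)); last first.
  by move=> f mon_f; rewrite (big_pred1 (Ordinal (mup_lt_monics b mon_f))).
under eq_bigr do rewrite big_mkcond.
rewrite exchange_big; apply: eq_bigr => e _.
rewrite -big_mkcond -big_filter (perm_big _ (@monics_mup_perm b e n (ltn_ord e))) /=.
by rewrite big_map big_filter.
Qed.

Lemma root_weight_XsubC_expM (S : seq 'F_p) (b : 'F_p) e g : b \notin S ->
  root_weight S (('X - b%:P) ^+ e * g) = root_weight S g.
Proof.
move=> bS; rewrite /root_weight !big_seq; apply: eq_bigr => a aS; congr x.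
apply: mupMr; case: e => [|e]; first by rewrite expr0 root1.
by rewrite root_exp_XsubC; apply: contraNneq bS => <-.
Qed.

(* Adding a new point b to S multiplies the series by X(t) (1 - t): both
   series are convolutions with the series B of monic g with g(b) != 0. *)
Lemma root_series_cons (S : seq 'F_p) (b : 'F_p) : b \notin S ->
  root_series (b :: S) = psmul x (psmul (@ps_one_minus_t R) (root_series S)).
Proof.
move=> bS; pose B n := \sum_(g <- monics p n | ~~ root g b) root_weight S g.
have -> : root_series (b :: S) = psmul x B.
  apply: funext => n; rewrite /root_series (sum_monics_by_mup b) /psmul.
  apply: eq_bigr => e _; rewrite mulr_sumr big_seq_cond [RHS]big_seq_cond.
  apply: eq_bigr => g.
  case/andP; rewrite mem_monics => /andP[/monic_neq0 g_neq0 _] gb.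
  rewrite /root_weight big_cons -!/(root_weight S _) root_weight_XsubC_expM //.
  rewrite (mupM _ (monic_neq0 (monic_XsubC_exp b e)) g_neq0).
  by rewrite mup_XsubCX eqxx mupNroot ?addn0.
have -> : root_series S = psmul (ps_inv_one_minus 1) B.
  apply: funext => n; rewrite /root_series (sum_monics_by_mup b) /psmul.
  apply: eq_bigr => e _; rewrite /ps_inv_one_minus expr1n mul1r.
  by apply: eq_bigr => g _; rewrite root_weight_XsubC_expM.
by congr psmul; rewrite psmulA one_minus_tV psmul1.
Qed.

Lemma root_series_nil : prime p -> root_series [::] = ps_inv_one_minus (p%:R : R).
Proof.
move=> p_pr; apply: funext => n; rewrite /root_series sum_monics.
under eq_bigr do rewrite /root_weight big_nil.
by rewrite sumr_const card_tuple card_Fp // /ps_inv_one_minus natrX.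
Qed.

Lemma root_series_uniq (S : seq 'F_p) : prime p -> uniq S ->
  root_series S = iter (size S) (fun u => psmul x (psmul (@ps_one_minus_t R) u))
                    (ps_inv_one_minus (p%:R : R)).
Proof.
move=> p_pr; elim: S => [|b S IHS] /=; first by rewrite root_series_nil.
by case/andP => bS uniqS; rewrite root_series_cons // IHS.
Qed.

End RootMultiplicitySeries.

Section UniqueFactorization.
Variable K : fieldType.
Local Notation poly := {poly K}.
Implicit Types f g h q : poly.

Lemma irred_ndvdp1 g : irreducible_poly g -> (g %| 1) = false.
Proof. by case=> size_g _; rewrite dvdp1; apply/negbTE; rewrite neq_ltn size_g orbT. Qed.

Lemma irred_dvdpM g h q : irreducible_poly g -> g %| h * q -> (g %| h) || (g %| q).
Proof.
move=> irr_g; case g_h: (g %| h) => //=.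
by rewrite Gauss_dvdpr // irreducible_poly_coprime // g_h.
Qed.

Lemma irred_dvdp_exp g h k : irreducible_poly g -> g %| h ^+ k -> g %| h.
Proof.
move=> irr_g; elim: k => [|k IHk]; first by rewrite expr0 irred_ndvdp1.
by rewrite exprS => /(irred_dvdpM irr_g) /orP[|/IHk].
Qed.

Lemma irred_dvdp_prod (I : Type) (r : seq I) (G : I -> poly) g :
  irreducible_poly g -> g %| \prod_(i <- r) G i -> has (fun i => g %| G i) r.
Proof.
move=> irr_g; elim: r => [|i r IHr]; first by rewrite big_nil irred_ndvdp1.
rewrite big_cons => /(irred_dvdpM irr_g) /orP[g_i|/IHr r_has].
  by rewrite /= g_i.
by rewrite /= r_has orbT.
Qed.

Lemma irred_monic_dvdp_eq g h : g \is monic -> h \is monic ->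
  irreducible_poly g -> irreducible_poly h -> g %| h -> g = h.
Proof.
move=> mon_g mon_h [size_g _] irr_h g_h; apply/eqP; rewrite -eqp_monic //.
by apply: irr_h => //; rewrite neq_ltn size_g orbT.
Qed.

Definition irr_factorization (s : seq (poly * nat)) : Prop :=
  [/\ uniq [seq ge.1 | ge <- s],
      all (fun ge : poly * nat => (ge.1 \is monic) && (0 < ge.2)%N) s
    & forall ge, ge \in s -> irreducible_poly ge.1].

Definition prod_powers (s : seq (poly * nat)) : poly := \prod_(ge <- s) ge.1 ^+ ge.2.

Lemma prod_powers_monic s :
  all (fun ge : poly * nat => ge.1 \is monic) s -> prod_powers s \is monic.
Proof.
by move/allP=> mon_s; rewrite /prod_powers big_seq monic_prod // => ge /mon_s /monic_exp.
Qed.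

Section Factorization.
Variable s : seq (poly * nat).
Hypothesis fact_s : irr_factorization s.

Lemma irr_factorization_monic ge : ge \in s -> ge.1 \is monic.
Proof. by case: fact_s => _ /allP mon_s _ /mon_s /andP[]. Qed.

Lemma irr_factorization_rem g e : (g, e) \in s -> ~~ (g %| prod_powers (rem (g, e) s)).
Proof.
case: fact_s => uniq_s _ irr_s ge_s.
have perm_s := perm_to_rem ge_s.
have g_notin : g \notin [seq ge.1 | ge <- rem (g, e) s].
  have := perm_uniq (perm_map (fun ge : poly * nat => ge.1) perm_s).
  by rewrite uniq_s /= => /esym /andP[].
apply/negP => /(irred_dvdp_prod (irr_s _ ge_s)) /hasP[[h k] hk_rem /= g_hk].
have hk_s : (h, k) \in s by rewrite (perm_mem perm_s) in_cons hk_rem orbT.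
have eq_gh := irred_monic_dvdp_eq (irr_factorization_monic ge_s)
  (irr_factorization_monic hk_s) (irr_s _ ge_s) (irr_s _ hk_s)
  (irred_dvdp_exp (irr_s _ ge_s) g_hk).
by move/negP: g_notin; apply; apply/mapP; exists (h, k).
Qed.

Lemma irr_factorization_exact g e : (g, e) \in s ->
  (g ^+ e %| prod_powers s) && ~~ (g ^+ e.+1 %| prod_powers s).
Proof.
move=> ge_s; have irr_g : irreducible_poly g by case: fact_s => _ _ /(_ _ ge_s).
rewrite [prod_powers s](big_rem _ ge_s) /= dvdp_mulr ?dvdpp //=.
rewrite exprSr dvdp_mul2l ?expf_neq0 ?(irredp_neq0 irr_g) //.
exact: irr_factorization_rem.
Qed.

Lemma irr_factorization_mem g e : g \is monic -> irreducible_poly g -> (0 < e)%N ->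
  g ^+ e %| prod_powers s -> ~~ (g ^+ e.+1 %| prod_powers s) -> (g, e) \in s.
Proof.
move=> mon_g irr_g e_gt0 ge_dvd ge1_ndvd; case: (fact_s) => _ _ irr_s.
have /hasP[[h k] hk_s /= g_hk] : has (fun ge => g %| ge.1 ^+ ge.2) s.
  by apply: (irred_dvdp_prod irr_g); apply: dvdp_trans ge_dvd; apply: dvdp_exp.
have eq_gh : g = h := irred_monic_dvdp_eq mon_g (irr_factorization_monic hk_s)
  irr_g (irr_s _ hk_s) (irred_dvdp_exp irr_g g_hk).
move: hk_s; rewrite -eq_gh => gk_s.
have /andP[gk_dvd gk1_ndvd] := irr_factorization_exact gk_s.
have [size_g _] := irr_g.
suff -> : e = k by [].
apply/eqP; rewrite eqn_leq; apply/andP; split; rewrite leqNgt -(dvdp_Pexp2l _ _ size_g).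
  by apply: contra gk1_ndvd => /dvdp_trans->.
by apply: contra ge1_ndvd => /dvdp_trans->.
Qed.

End Factorization.
Lemma irr_factorization_perm s1 s2 : irr_factorization s1 -> irr_factorization s2 ->
  prod_powers s1 = prod_powers s2 -> perm_eq s1 s2.
Proof.
have sub12 t1 t2 : irr_factorization t1 -> irr_factorization t2 ->
    prod_powers t1 = prod_powers t2 -> {subset t1 <= t2}.
  move=> fact1 fact2 eq_t [g e] ge_t1.
  have /andP[ge_dvd ge1_ndvd] := irr_factorization_exact fact1 ge_t1.
  case: (fact1) => _ /allP/(_ _ ge_t1)/andP[mon_g e_gt0] /(_ _ ge_t1) irr_g.
  by apply: irr_factorization_mem; rewrite -?eq_t.
move=> fact1 fact2 eq_s; apply: uniq_perm.
- by case: fact1 => /map_uniq.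
- by case: fact2 => /map_uniq.
by move=> ge; apply/idP/idP; apply: sub12.
Qed.

Lemma size_prod_powers s : all (fun ge : poly * nat => ge.1 \is monic) s ->
  size (prod_powers s) = (\sum_(ge <- s) (size ge.1).-1 * ge.2)%N.+1.
Proof.
elim: s => [|[g e] s IHs] /=; first by rewrite /prod_powers !big_nil size_poly1.
case/andP=> mon_g mon_s; rewrite /prod_powers !big_cons -/(prod_powers s).
rewrite size_monicM ?monic_exp ?monic_neq0 ?prod_powers_monic // IHs //= addnS.
by rewrite -size_exp /= -addSn prednK // size_poly_gt0 expf_neq0 ?monic_neq0.
Qed.

Lemma monic_reducible_split f : f \is monic -> (1 < size f)%N -> ~ irreducible_poly f ->
  exists g h, [/\ g \is monic, h \is monic, f = h * g,
                  (size g < size f)%N & (size h < size f)%N].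
Proof.
move=> mon_f size_f red_f; have f_neq0 := monic_neq0 mon_f.
have : ~ forall q : poly, size q != 1%N -> q %| f -> q %= f.
  by move=> irr_f; apply: red_f; split.
move/existsNP=> [q /not_implyP[size_q /not_implyP[q_f /negP q_nassoc]]].
have q_neq0 : q != 0 by apply: contraTneq q_f => ->; rewrite dvd0p.
pose g := (lead_coef q)^-1 *: q.
have lq_neq0 : (lead_coef q)^-1 != 0 by rewrite invr_eq0 lead_coef_eq0.
have mon_g : g \is monic by rewrite monicE lead_coefZ mulVf ?lead_coef_eq0.
have g_f : g %| f by rewrite dvdpZl.
have size_gf : (size g < size f)%N.
  rewrite ltn_neqAle dvdp_leq // andbT dvdp_size_eqp //.
  by rewrite (eqp_ltrans (eqp_scale _ lq_neq0)).
have size_g : (1 < size g)%N.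
  by rewrite size_scale // ltn_neqAle eq_sym size_q size_poly_gt0.
pose h := f %/ g.
have def_f : f = h * g by rewrite divpK.
have h_neq0 : h != 0 by apply: contra_neq f_neq0; rewrite def_f => ->; rewrite mul0r.
exists g, h; split=> //; first by rewrite -(monicMr _ mon_g) -def_f.
have := size_Mmonic h_neq0 mon_g; rewrite -def_f.
by move=> ->; move: (size h) (size g) size_g => m n; lia.
Qed.

Lemma monic_irr_factors f : f \is monic -> exists l : seq poly,
  [/\ all (fun g : poly => g \is monic) l,
      forall g, g \in l -> irreducible_poly g & f = \prod_(g <- l) g].
Proof.
have [n] := ubnP (size f); elim: n f => // n IHn f size_f mon_f.
have [size_f_le1|size_f_gt1] := leqP (size f) 1.
  have size_f1 : size f = 1%N.
    by apply/anti_leq; rewrite size_f_le1 size_poly_gt0 monic_neq0.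
  have lc_f := monicP mon_f; rewrite /lead_coef size_f1 in lc_f.
  by exists [::]; split=> //; rewrite big_nil [f]size1_polyC ?size_f1 // lc_f.
have [irr_f|red_f] := pselect (irreducible_poly f).
  exists [:: f]; split; rewrite ?big_seq1 /= ?mon_f //.
  by move=> g; rewrite mem_seq1 => /eqP->.
have [g [h [mon_g mon_h def_f size_g size_h]]] :=
  monic_reducible_split mon_f size_f_gt1 red_f.
have [lg [mon_lg irr_lg def_g]] := IHn g (leq_trans size_g size_f) mon_g.
have [lh [mon_lh irr_lh def_h]] := IHn h (leq_trans size_h size_f) mon_h.
exists (lh ++ lg); split; first by rewrite all_cat mon_lh mon_lg.
  by move=> k; rewrite mem_cat => /orP[/irr_lh|/irr_lg].
by rewrite big_cat -def_g -def_h.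
Qed.

Lemma irr_factorization_exists f : f \is monic ->
  exists s, irr_factorization s /\ f = prod_powers s.
Proof.
case/monic_irr_factors=> l [mon_l irr_l def_f].
exists [seq (g, count_mem g l) | g <- undup l]; split; last first.
  by rewrite /prod_powers big_map /= prodr_undup_exp_count.
split; first by rewrite -map_comp map_id undup_uniq.
  apply/allP => _ /mapP[g g_l ->] /=; rewrite mem_undup in g_l.
  by rewrite (allP mon_l _ g_l) -has_count has_pred1 g_l.
by move=> _ /mapP[g g_l ->]; apply: irr_l; rewrite -mem_undup.
Qed.

End UniqueFactorization.

Lemma lepair_trans : transitive lepair.
Proof.
move=> [b1 b2] [a1 a2] [c1 c2]; rewrite /lepair /=.
case/orP=> [lt_ba|/andP[/eqP eq_ba le_ba]]; case/orP=> [lt_ac|/andP[/eqP eq_ac le_ac]];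
  apply/orP; (try by left; lia); right; apply/andP; split; apply/eqP || idtac; lia.
Qed.

Lemma lepair_total : total lepair.
Proof.
by move=> [a1 a2] [b1 b2]; rewrite /lepair /=; case: ltngtP => //= _; apply: leq_total.
Qed.

Lemma lepair_anti : antisymmetric lepair.
Proof.
move=> [a1 a2] [b1 b2]; rewrite /lepair /=.
case: ltngtP => //= -> /andP[le_ab le_ba].
by congr pair; apply/eqP; rewrite eqn_leq le_ab le_ba.
Qed.

Lemma mem_seqs_upto (T : eqType) (A : seq T) k s :
  all (mem A) s -> (size s <= k)%N -> s \in seqs_upto A k.
Proof.
elim: k s => [|k IHk] [|a s] //= /andP[aA sA] size_s.
rewrite in_cons; apply/orP; right.
by apply: (allpairs_f (fun a s => a :: s)); last apply: IHk.
Qed.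

Lemma seqs_upto_uniq (T : eqType) (A : seq T) k : uniq A -> uniq (seqs_upto A k).
Proof.
move=> uniqA; elim: k => [|k IHk] //=; apply/andP; split.
  by apply/allpairsP => -[[a s] []].
by apply: allpairs_uniq => // -[a1 s1] [a2 s2] _ _ /= [-> ->].
Qed.

Lemma stypes_uniq n : uniq (stypes n).
Proof.
apply/filter_uniq/seqs_upto_uniq/allpairs_uniq; rewrite ?iota_uniq //.
by move=> [a b] [c d] _ _ /= [-> ->].
Qed.

Lemma mem_stypes n s : s \in stypes n -> sorted lepair s /\ stdeg s = n.
Proof. by rewrite mem_filter => /andP[/andP[sorted_s /eqP deg_s] _]. Qed.

Lemma stypes_mem n s : sorted lepair s -> stdeg s = n ->
  all (fun de : nat * nat => (0 < de.1)%N && (0 < de.2)%N) s -> s \in stypes n.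
Proof.
move=> sorted_s deg_s /allP pos_s; rewrite mem_filter sorted_s deg_s eqxx /=.
have de_le_n de : de \in s -> (de.1 * de.2 <= n)%N.
  by move=> de_s; rewrite -deg_s /stdeg (big_rem _ de_s) leq_addr.
apply: mem_seqs_upto.
  apply/allP => -[d e] de_s; have /andP[/= d_gt0 e_gt0] := pos_s _ de_s.
  have /= de_n := de_le_n _ de_s.
  by apply: (allpairs_f (fun d e => (d, e))); rewrite !mem_iota; nia.
rewrite -deg_s /stdeg -sum1_size big_seq [X in (_ <= X)%N]big_seq.
by apply: leq_sum => de /pos_s; rewrite muln_gt0.
Qed.

Section RootsOfFactorization.
Variable K : fieldType.
Local Notation poly := {poly K}.

Definition linear_exponent (a : K) (s : seq (poly * nat)) : nat :=
  (\sum_(ge <- s) (if ge.1 == ('X - a%:P)%R then ge.2 else 0))%N.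

Lemma mup_irr_exp (a : K) g e : g \is monic -> irreducible_poly g ->
  mup a (g ^+ e) = if g == 'X - a%:P then e else 0%N.
Proof.
move=> mon_g irr_g; case: eqP => [->|ne_g]; first by rewrite mup_XsubCX eqxx.
apply: mupNroot; elim: e => [|e IHe]; first by rewrite expr0 root1.
rewrite exprS rootM negb_or IHe andbT root_factor_theorem.
apply/negP => Xa_g; apply: ne_g; apply/esym.
exact: irred_monic_dvdp_eq (monicXsubC a) mon_g (irredp_XsubC a) irr_g Xa_g.
Qed.

Lemma mup_prod_powers (a : K) s :
  all (fun ge : poly * nat => ge.1 \is monic) s ->
  (forall ge, ge \in s -> irreducible_poly ge.1) ->
  mup a (prod_powers s) = linear_exponent a s.
Proof.
elim: s => [|[g e] s IHs] /=.
  by rewrite /prod_powers /linear_exponent !big_nil mupNroot ?root1.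
case/andP=> mon_g mon_s irr_s.
have irr_g : irreducible_poly g by apply: (irr_s (g, e)); rewrite mem_head.
rewrite /prod_powers big_cons mupM ?expf_neq0 ?monic_neq0 ?prod_powers_monic //.
rewrite mup_irr_exp // -/(prod_powers s) IHs /linear_exponent ?big_cons // => ge ge_s.
by apply: irr_s; rewrite in_cons ge_s orbT.
Qed.

Lemma monic_size2_XsubC (g : poly) : g \is monic -> size g = 2%N -> g = 'X - (- g`_0)%:P.
Proof.
move=> mon_g size_g; apply/polyP => -[|[|i]]; rewrite coefB coefX coefC /=.
- by rewrite sub0r opprK.
- by rewrite subr0; move/monicP: mon_g; rewrite /lead_coef size_g.
by rewrite subr0 nth_default // size_g.
Qed.

End RootsOfFactorization.

Section LinearFactorWeights.
Variables (K : finFieldType) (R : comNzRingType) (x : nat -> R).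
Hypothesis x0 : x 0%N = 1.
Local Notation poly := {poly K}.

Lemma linear_exponent_cons (a : K) g e s :
  linear_exponent a ((g, e) :: s) =
    ((if g == ('X - a%:P)%R then e else 0) + linear_exponent a s)%N.
Proof. by rewrite /linear_exponent big_cons. Qed.

Lemma linear_exponent_notin (a : K) s :
  'X - a%:P \notin [seq ge.1 | ge <- s] -> linear_exponent a s = 0%N.
Proof.
move=> Xa_notin; rewrite /linear_exponent big_seq big1 // => ge ge_s.
by rewrite ifF //; apply: contraNF Xa_notin => /eqP <-; apply: map_f.
Qed.

(* prod_{a in K} x_{exponent of X - a} is the product of the x_e over the
   factors of degree 1: the other linear factors contribute x_0 = 1. *)
Lemma prod_linear_exponent s : uniq [seq ge.1 | ge <- s] ->
  all (fun ge : poly * nat => ge.1 \is monic) s ->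
  \prod_(a <- enum K) x (linear_exponent a s) =
  \prod_(ge <- s | (size ge.1).-1 == 1%N) x ge.2.
Proof.
elim: s => [|[g e] s IHs] /=.
  by move=> _ _; rewrite big_nil big1 // => a _; rewrite /linear_exponent big_nil x0.
case/andP=> g_notin uniq_s /andP[mon_g mon_s]; rewrite big_cons /= -IHs //.
under eq_bigr do rewrite linear_exponent_cons.
case: ifPn => [/eqP deg_g|deg_g]; last first.
  apply: eq_bigr => a _; rewrite ifF //; apply: contraNF deg_g => /eqP->.
  by rewrite size_XsubC.
have size_g : size g = 2%N by move: deg_g; case: (size g) => [|[|[|k]]].
have def_g : g = 'X - (- g`_0)%:P := monic_size2_XsubC mon_g size_g.
move: g_notin; rewrite {}def_g; set a0 := - g`_0 => Xa0_notin.
rewrite !(bigD1_seq a0) ?mem_enum ?enum_uniq //= eqxx.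
rewrite (linear_exponent_notin Xa0_notin) x0 addn0 mul1r; congr (_ * _).
apply: eq_bigr => a ne_a; rewrite ifF //.
by apply/negbTE; apply: contra ne_a => /eqP /(addrI _) /oppr_inj /polyC_inj ->.
Qed.

End LinearFactorWeights.

Section SplittingTypeOfPolynomial.
Variables (p : nat) (R : comNzRingType) (x : nat -> R).
Hypothesis x0 : x 0%N = 1.
Local Notation poly := {poly 'F_p}.

Definition factorization_type (s : seq (poly * nat)) : seq (nat * nat) :=
  [seq ((size (ge.1 : poly)).-1, ge.2) | ge <- s].

Lemma has_stype_weight (f : poly) sigma : has_stype f sigma ->
  \prod_(de <- sigma | de.1 == 1%N) x de.2 = root_weight x (enum 'F_p) f.
Proof.
case=> s [uniq_s /allP pos_s irr_s def_f perm_s].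
have mon_s : all (fun ge : poly * nat => ge.1 \is monic) s.
  by apply/allP => ge /pos_s /andP[].
rewrite -(perm_big _ perm_s) big_map /= -prod_linear_exponent //.
by apply: eq_bigr => a _; rewrite def_f mup_prod_powers.
Qed.

Lemma sorted_type_stypes n (f : poly) s : irr_factorization s -> f = prod_powers s ->
  size f = n.+1 -> sort lepair (factorization_type s) \in stypes n.
Proof.
case=> _ /allP pos_s irr_s def_f size_f.
have mon_s : all (fun ge : poly * nat => ge.1 \is monic) s.
  by apply/allP => ge /pos_s /andP[].
apply: stypes_mem; first exact: sort_sorted lepair_total _.
  move: size_f; rewrite def_f size_prod_powers // => -[<-].
  by rewrite /stdeg (perm_big _ (permEl (perm_sort _ _))) big_map.
rewrite all_sort all_map; apply/allP => ge ge_s /=.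
have [size_g _] := irr_s _ ge_s; have /andP[_ ->] := pos_s _ ge_s.
by rewrite andbT -ltnS prednK // ltnW.
Qed.

Lemma has_stype_uniq n (f : poly) sigma1 sigma2 :
  sigma1 \in stypes n -> sigma2 \in stypes n ->
  has_stype f sigma1 -> has_stype f sigma2 -> sigma1 = sigma2.
Proof.
move=> /mem_stypes[sorted1 _] /mem_stypes[sorted2 _].
case=> s1 [u1 a1 i1 def1 perm1] [s2 [u2 a2 i2 def2 perm2]].
apply: (sorted_eq lepair_trans lepair_anti) => //.
rewrite -(permPl perm1) -(permPr perm2); apply: perm_map.
by apply: irr_factorization_perm => //; rewrite /prod_powers -def1 -def2.
Qed.

Lemma sum_stypes_weight n (f : poly) : f \is monic -> size f = n.+1 ->
  \sum_(sigma <- stypes n)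
     (if `[< has_stype f sigma >] then \prod_(de <- sigma | de.1 == 1%N) x de.2 else 0)
  = root_weight x (enum 'F_p) f.
Proof.
move=> mon_f size_f; have [s [fact_s def_f]] := irr_factorization_exists mon_f.
set sigma0 := sort lepair (factorization_type s).
have sigma0_in := sorted_type_stypes fact_s def_f size_f.
have has_sigma0 : has_stype f sigma0.
  by case: fact_s => *; exists s; split; rewrite // perm_sym perm_sort.
rewrite (bigD1_seq sigma0) ?stypes_uniq //= asboolT // (has_stype_weight has_sigma0).
rewrite big_seq_cond big1 ?addr0 // => sigma /andP[sigma_in ne_sigma].
case: asboolP => // has_sigma; move: ne_sigma.
by rewrite (has_stype_uniq sigma_in sigma0_in has_sigma has_sigma0) eqxx.
Qed.

End SplittingTypeOfPolynomial.

Lemma Nst_sum p (R : comNzRingType) n sigma (w : R) : stdeg sigma = n ->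
  (Nst p sigma)%:R * w =
  \sum_(c : n.-tuple 'F_p) (if `[< has_stype (mkmonic c) sigma >] then w else 0).
Proof.
move=> deg_sigma; rewrite -big_mkcond sumr_const /Nst -deg_sigma mulr_natl.
by congr (_ *+ _); apply: eq_card => c; rewrite inE.
Qed.

Theorem corollary2p3 (p : nat) (R : comNzRingType) (x : nat -> R) :
  prime p -> x 0%N = 1 ->
  (fun n => \sum_(sigma <- stypes n)
              (Nst p sigma)%:R * \prod_(de <- sigma | de.1 == 1%N) x de.2)
  = psmul (psexp x p)
      (psmul (psexp (@ps_one_minus_t R) p) (ps_inv_one_minus (p%:R : R))).
Proof.
move=> p_prime x0.
rewrite -iter_psmul2 -[p in iter p](card_Fp p_prime) cardE.
rewrite -(root_series_uniq x p_prime (enum_uniq 'F_p)).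
apply: funext => n; rewrite /root_series sum_monics big_seq.
under eq_bigr => sigma /mem_stypes[_ deg_sigma] do rewrite (Nst_sum p _ deg_sigma).
rewrite -big_seq exchange_big /=; apply: eq_bigr => c _.
exact: sum_stypes_weight (mkmonic_monic c) (size_mkmonic c).
Qed.
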